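(* Let $V$ be a vector space of dimension $n$ over a field, and let $g_1,\dots,g_{n+1}\in\mathrm{GL}(V)$ satisfy $\operatorname{rank}(g_i-1)\le 1$ for all $i$ and $g_1\cdots g_{n+1}=\mu\cdot\mathrm{id}_V$ for a scalar $\mu$. If $\mu\ne 1$ and $\mu$ is not an eigenvalue of any $g_i$, then each $g_i$ is a pseudoreflection and the group generated by $g_1,\dots,g_{n+1}$ acts irreducibly on $V$.
   Context: An element $g\in\mathrm{GL}(V)$ is a pseudoreflection if $\operatorname{rank}(g-1)=1$. *)

From mathcomp Require Import all_boot all_order all_algebra.
Set Implicit Arguments. Unset Strict Implicit. Unset Printing Implicit Defensive.
Import GRing.Theory.
Local Open Scope ring_scope.

(* Elements of GL(V), V = 'rV[F]_n, are invertible n x n matrices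
   (MathComp row-vector convention). *)

Inductive gen_group (F : fieldType) (n : nat) (I : Type) (g : I -> 'M[F]_n)
  : 'M[F]_n -> Prop :=
| gen_one : gen_group g 1%:M
| gen_gen : forall i, gen_group g (g i)
| gen_mul : forall a b, gen_group g a -> gen_group g b -> gen_group g (a *m b)
| gen_inv : forall a, gen_group g a -> gen_group g (invmx a).

Definition acts_irreducibly (F : fieldType) (n : nat) (G : 'M[F]_n -> Prop) : Prop :=
  (0 < n)%N /\
  forall W : 'M[F]_n, (forall h, G h -> stablemx W h) ->
    W == 0 :> 'M[F]_n \/ row_full W.

Definition pseudoreflection (F : fieldType) (n : nat) (h : 'M[F]_n) : Prop :=
  h \in unitmx /\ \rank (h - 1%:M) = 1%N.

From mathcomp Require Import all_boot all_order all_algebra.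
From mathcomp Require Import zify.
Set Implicit Arguments. Unset Strict Implicit. Unset Printing Implicit Defensive.
Import GRing.Theory.
Local Open Scope ring_scope.

(* Matrices act on row vectors.  For subspaces U, X stable under all g_i with
   dim U < dim X, call i moving when X (g_i - 1) is not contained in U.  More
   than dim X - dim U indices are moving: otherwise let m be the last moving
   index and pick v in X \ U with v (g_i - 1) in U for the earlier moving i
   (each such condition has rank at most 1, so costs one dimension).  Modulo U,
   v is then fixed by g_1, ..., g_(m-1) and X is fixed by g_(m+1), ..., so
   mu v = v g_1 ... g_(n+1) = v g_m, i.e. v (g_m - mu) lies in U; as g_m - mu is
   invertible and preserves U, v lies in U.
   With U = 0, X = V every index moves, so every g_i is a pseudoreflection.  A
   stable 0 < W < V would have more than dim W indices moving W off 0 and more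
   than n - dim W indices moving V off W; these sets are disjoint because a
   nonzero W (g_i - 1) is the whole line image of g_i - 1, and g_i - 1 maps W
   into W.  That gives more than n + 1 indices. *)

Section RankConstraints.

Variables (F : fieldType) (n : nat).

Lemma mxrank_cap_kermx m p (Y : 'M[F]_(m, n)) (B : 'M[F]_(n, p)) :
  (\rank Y <= \rank (Y :&: kermx B)%MS + \rank B)%N.
Proof.
have := mxrank_sum_cap Y (kermx B); rewrite mxrank_ker.
have := rank_leq_col (Y + kermx B)%MS; have := rank_leq_row B; lia.
Qed.

Lemma constrained_subspace (X U : 'M[F]_n) (As : seq 'M[F]_n) :
  all (fun A => \rank A <= 1)%N As ->
  exists Y : 'M[F]_n, [/\ (Y <= X)%MS, (\rank X <= \rank Y + size As)%N
                        & all (fun A => Y *m A <= U)%MS As].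
Proof.
elim: As => [|A As IH] /=; first by exists X; rewrite submx_refl addn0.
case/andP=> rA /IH[Y [YX rY YAs]].
exists (Y :&: kermx (A *m cokermx U))%MS; split.
- exact: submx_trans (capmxSl _ _) YX.
- have := mxrank_cap_kermx Y (A *m cokermx U).
  have := leq_trans (mxrankM_maxl A (cokermx U)) rA; lia.
- rewrite submxE -mulmxA -sub_kermx capmxSr /=.
  apply/allP=> B /(allP YAs); exact/submx_trans/submxMr/capmxSl.
Qed.

Lemma exists_row_constrained (X U : 'M[F]_n) (As : seq 'M[F]_n) :
  all (fun A => \rank A <= 1)%N As -> (\rank U + size As < \rank X)%N ->
  exists2 v : 'rV[F]_n, (v <= X)%MS && ~~ (v <= U)%MS
                      & all (fun A => v *m A <= U)%MS As.
Proof.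
case/(constrained_subspace X U)=> Y [YX rY YAs] rUX.
have /row_subPn[i YiU] : ~~ (Y <= U)%MS by apply/negP=> /mxrankS; lia.
exists (row i Y); first by rewrite YiU (submx_trans (row_sub i Y) YX).
apply/allP=> A /(allP YAs); exact/submx_trans/submxMr/row_sub.
Qed.

Lemma rank_le1_sub_mulmx m (W : 'M[F]_(m, n)) (A : 'M[F]_n) :
  (\rank A <= 1)%N -> W *m A != 0 -> (A <= W *m A)%MS.
Proof.
rewrite -mxrank_eq0 -lt0n => rA nzWA.
case: (mxrank_leqif_sup (submxMl W A)) => _ <-.
by rewrite eqn_leq mxrankM_maxr; lia.
Qed.

Lemma stablemx_unit_sub (U A : 'M[F]_n) (v : 'rV[F]_n) :
  stablemx U A -> A \in unitmx -> (v *m A <= U)%MS -> (v <= U)%MS.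
Proof.
move=> sUA uA vAU; have frA : row_free A by rewrite row_free_unit.
have UUA : (U <= U *m A)%MS.
  by case: (mxrank_leqif_sup sUA) => _ <-; rewrite mxrankMfree.
by rewrite -(submxMfree _ _ frA) (submx_trans vAU UUA).
Qed.

End RankConstraints.

Lemma count_iota_last (a : pred nat) N : (0 < N)%N ->
  exists2 m, (m < N)%N & (forall i, (m < i < N)%N -> ~~ a i)
                       /\ (count a (iota 0 m) <= (count a (iota 0 N)).-1)%N.
Proof.
case: N => // N _; elim: N => [|N [m ltmN [after cnt]]].
  by exists 0%N => //; split=> // -[|i].
rewrite -addn1 iotaD count_cat add0n [count a (iota _ 1)]/= addn0.
case aN : (a N.+1).
  exists N.+1; first by rewrite addn1.
  by split=> [i /andP[] lt1 lt2|]; [exfalso | ]; lia.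
exists m; first by rewrite addn1 ltnW.
split; last by rewrite addn0.
move=> i /andP[mi]; rewrite addn1 ltnS leq_eqVlt => /orP[/eqP -> | iN].
  by rewrite aN.
by apply: after; rewrite mi.
Qed.

Section ScalarProduct.

Variables (F : fieldType) (n N : nat) (G : nat -> 'M[F]_n) (mu : F) (U : 'M[F]_n).
Hypothesis prodG : \prod_(0 <= i < N) G i = mu%:M.
Hypothesis G_mu_unit : forall i, (i < N)%N -> G i - mu%:M \in unitmx.
Hypothesis stableU : forall i, stablemx U (G i).

Lemma stablemx_prod (X : 'M[F]_n) a b :
  (forall i, stablemx X (G i)) -> stablemx X (\prod_(a <= i < b) G i).
Proof.
move=> sX; apply: (big_ind (fun A => stablemx X A)) => //; first by rewrite mulmx1.
exact: stablemxM.
Qed.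

Lemma prod_fix_mod (w : 'rV[F]_n) a b :
  (forall i, (a <= i < b)%N -> (w *m (G i - 1%:M) <= U)%MS) ->
  (w *m \prod_(a <= i < b) G i - w <= U)%MS.
Proof.
elim: b => [|b IH] hw; first by rewrite big_geq // mulmx1 subrr sub0mx.
have [ab|ba] := leqP a b; last by rewrite big_geq // mulmx1 subrr sub0mx.
rewrite big_nat_recr //=.
have -> : w *m (\prod_(a <= i < b) G i * G b) - w
    = (w *m \prod_(a <= i < b) G i - w) *m G b + w *m (G b - 1%:M).
  by rewrite mulmxBl mulmxBr mulmx1 mulmxA addrA subrK.
rewrite addmx_sub ?hw ?ab ?ltnSn //.
apply: submx_trans (submxMr _ (IH _)) (stableU b) => i /andP[ai ib].
by apply: hw; rewrite ai ltnW.
Qed.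

Lemma sub_of_prod_scalar (X : 'M[F]_n) (v : 'rV[F]_n) m :
  (m < N)%N -> (forall i, stablemx X (G i)) -> (v <= X)%MS ->
  (forall i, (i < m)%N -> (v *m (G i - 1%:M) <= U)%MS) ->
  (forall i, (m < i < N)%N -> (X *m (G i - 1%:M) <= U)%MS) ->
  (v <= U)%MS.
Proof.
move=> ltmN sX vX hv hX.
set P := \prod_(0 <= i < m) G i; set R := \prod_(m.+1 <= i < N) G i.
have splitG : \prod_(0 <= i < N) G i = P * G m * R.
  by rewrite (@big_cat_nat _ _ _ m) ?(ltnW ltmN) //= (big_ltn ltmN) mulrA.
set w := v *m P *m G m.
have vP : (v *m P - v <= U)%MS by apply: prod_fix_mod => i /andP[_]; exact: hv.
have wX : (w <= X)%MS.
  by rewrite /w -mulmxA (submx_trans (submxMr _ vX)) // stablemxM ?stablemx_prod.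
have wR : (w *m R - w <= U)%MS.
  by apply: prod_fix_mod => i hi; exact: submx_trans (submxMr _ wX) (hX i hi).
have vGmu : (v *m (G m - mu%:M) <= U)%MS.
  have vmu : v *m mu%:M = w *m R by rewrite -prodG splitG !mulmxA.
  have -> : v *m (G m - mu%:M) = - ((v *m P - v) *m G m + (w *m R - w)).
    by rewrite mulmxBr vmu mulmxBl opprD !opprB addrA subrK.
  by rewrite eqmx_opp addmx_sub // (submx_trans (submxMr _ vP)).
apply: stablemx_unit_sub vGmu; last exact: G_mu_unit.
by apply: stablemxD; rewrite ?stablemxN ?stablemxC.
Qed.

Lemma rank_gap_lt_count_moving (X : 'M[F]_n) :
  (0 < N)%N -> (forall i, \rank (G i - 1%:M)%R <= 1)%N ->
  (forall i, stablemx X (G i)) -> (\rank U < \rank X)%N ->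
  (\rank X < \rank U + count (fun i => ~~ (X *m (G i - 1%:M) <= U)%MS) (iota 0 N))%N.
Proof.
move=> N0 rG sX rUX; set moving := (fun i => _).
rewrite ltnNge; apply/negP => cnt_le.
have [m ltmN [after cnt_m]] := count_iota_last moving N0.
set l := [seq i <- iota 0 m | moving i].
have [||v /andP[vX /negP vU] vl] :=
  @exists_row_constrained F n X U [seq G i - 1%:M | i <- l].
- by apply/allP => A /mapP[i _ ->].
- by rewrite size_map size_filter; move: cnt_m; set c := count _ (iota 0 m); lia.
apply: vU (sub_of_prod_scalar ltmN sX vX _ _) => [i im|i hi].
  case mi : (moving i); last exact: submx_trans (submxMr _ vX) (negbFE mi).
  by apply: (allP vl); apply: map_f; rewrite mem_filter mi mem_iota.
exact/negbNE/after.
Qed.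

End ScalarProduct.

Section FactorsOfScalar.

Variables (F : fieldType) (n : nat) (G : nat -> 'M[F]_n) (mu : F).
Hypothesis prodG : \prod_(0 <= i < n.+1) G i = mu%:M.
Hypothesis G_mu_unit : forall i, (i < n.+1)%N -> G i - mu%:M \in unitmx.
Hypothesis rankG : forall i, (\rank (G i - 1%:M)%R <= 1)%N.

Lemma rank_factor_eq1 i : (0 < n)%N -> (i < n.+1)%N -> \rank (G i - 1%:M) = 1%N.
Proof.
move=> n_gt0 ltin.
have := @rank_gap_lt_count_moving F n n.+1 G mu 0 prodG G_mu_unit
  (fun i => stable0mx _ (G i)) 1%:M (ltn0Sn n) rankG (fun _ => submx1 _).
rewrite mxrank0 mxrank1 add0n => /(_ n_gt0) cnt.
have all_moving :
    all (fun i => ~~ (1%:M *m (G i - 1%:M) <= (0 : 'M_n))%MS) (iota 0 n.+1).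
  by rewrite all_count eqn_leq count_size size_iota.
have := allP all_moving i; rewrite mem_iota ltin mul1mx submx0 -mxrank_eq0 -lt0n.
move=> /(_ isT); have := rankG i; lia.
Qed.

Lemma stablemx_trivial (W : 'M[F]_n) :
  (forall i, stablemx W (G i)) -> W == 0 \/ row_full W.
Proof.
move=> sW; have [->|W0] := eqVneq W 0; [by left | right].
apply/negPn/negP => nfull.
have rW : (0 < \rank W < n)%N.
  by rewrite lt0n mxrank_eq0 W0 ltn_neqAle rank_leq_col andbT.
have := @rank_gap_lt_count_moving F n n.+1 G mu 0 prodG G_mu_unit
  (fun i => stable0mx _ (G i)) W (ltn0Sn n) rankG sW.
rewrite mxrank0 add0n => /(_ (proj1 (andP rW))) cnt_ker.
have := @rank_gap_lt_count_moving F n n.+1 G mu W prodG G_mu_unit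
  sW 1%:M (ltn0Sn n) rankG (fun _ => submx1 _).
rewrite mxrank1 => /(_ (proj2 (andP rW))) cnt_img.
set moveW := (fun i => _) in cnt_ker; set moveV := (fun i => _) in cnt_img.
have disjoint : count (predI moveW moveV) (iota 0 n.+1) = 0%N.
  rewrite -[RHS](count_pred0 (iota 0 n.+1)); apply: eq_count => i /=.
  rewrite /moveW /moveV mul1mx submx0; apply/negP => /andP[WA /negP]; apply.
  apply: submx_trans (rank_le1_sub_mulmx (rankG i) WA) _.
  by apply: stablemxD; rewrite ?stablemxN ?stablemxC.
have := count_predUI moveW moveV (iota 0 n.+1).
have := count_size (predU moveW moveV) (iota 0 n.+1).
rewrite size_iota disjoint; lia.
Qed.

End FactorsOfScalar.

Theorem mainTheorem3 (F : fieldType) (n : nat) (hn : (0 < n)%N)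
  (g : 'I_n.+1 -> 'M[F]_n) (mu : F) :
  (forall i, g i \in unitmx) ->
  (forall i, (\rank (g i - 1%:M)%R <= 1)%N) ->
  \big[mulmx/1%:M]_(i < n.+1) g i = mu%:M ->
  mu != 1 ->
  (forall i, ~~ eigenvalue (g i) mu) ->
  (forall i, pseudoreflection (g i)) /\ acts_irreducibly (gen_group g).
Proof.
move=> g_unit g_rank prod_g _ mu_not_eigen.
pose G i := g (inord i).
have GE (i : 'I_n.+1) : G i = g i by rewrite /G inord_val.
have prodG : \prod_(0 <= i < n.+1) G i = mu%:M.
  by rewrite big_mkord; under eq_bigr do rewrite GE.
have G_mu_unit i : (i < n.+1)%N -> G i - mu%:M \in unitmx.
  by rewrite -row_free_unit -kermx_eq0 -[_ == 0]negbK; have := mu_not_eigen (inord i).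
have rankG i : (\rank (G i - 1%:M)%R <= 1)%N := g_rank (inord i).
split=> [i|].
  by split; [exact: g_unit | rewrite -GE (rank_factor_eq1 prodG G_mu_unit rankG hn)].
split=> // W stableW; apply: (stablemx_trivial prodG G_mu_unit rankG) => i.
exact/stableW/gen_gen.
Qed.
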